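(* Let $G=(V,E,X)$ be a spatial graph with $E\neq\emptyset$, let $(R,A,k)\in\mathrm{Sim}(p)$ and $G'=\psi(G,(R,A,k))=(V,E,kRX+A)$. Assume $0<\sup_{\theta\ge0} d_B(PD(G),PD(f_\theta(G)))<\infty$ and that this supremum is attained. Then for every $\theta\ge0$, $S_{k\theta}(G')=S_\theta(G)$; consequently $\arg\min_{\beta\ge0}S_\beta(G')=k\cdot\arg\min_{\theta\ge0}S_\theta(G)$. In particular, if $\theta^*$ minimizes $\theta\mapsto S_\theta(G)$, then $\beta^*=k\theta^*$ minimizes $\beta\mapsto S_\beta(G')$, and the topological spatial graph coarsening $F(G)=f_{\theta^*}(G)$ is equivariant: $$F(\psi(G,(R,A,k)))=f_{k\theta^*}(G')=\psi(F(G),(R,A,k)).$$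
   Context: A spatial graph is a triple $G=(V,E,X)$ with finite node set $V$, undirected edge set $E\subseteq V\times V$, positions $x_u\in\mathbb{R}^p$, and edge lengths $\ell_{u,v}=\|x_u-x_v\|$. For $\theta\ge0$, $sub(G,\theta)=(V,\{(u,v)\in E:\ell_{u,v}\le\theta\})$. Coarsening: $f_\theta(G)=(f^V_\theta(G),f^E_\theta(G),f^X_\theta(G))$, where $f^V_\theta(G)=\{V_1,\dots,V_K\}$ is the partition of $V$ into vertex sets of connected components of $sub(G,\theta)$ (hypernodes); $f^E_\theta(G)$ contains $(V_i,V_j)$ for distinct hypernodes iff some $u\in V_i$, $v\in V_j$ have $(u,v)\in E$; positions are either average positioning $f^X_\theta(G)_i=\frac1{|V_i|}\sum_{u\in V_i}x_u$ or degree positioning $f^X_\theta(G)_i=x_u$, $u=\arg\max_{v\in V_i}\deg(v)$ (degree in $(V,E)$, ties broken by a fixed rule depending only on $(V,E)$). The coarsened graph is a spatial graph with Euclidean edge lengths between hypernode positions. Similarity action: for $R\in O_p(\mathbb{R})$, $A\in\mathbb{R}^p$, $k>0$, $\psi(G,(R,A,k))$ replaces each position $x$ by $kRx+A$ (for any spatial graph, including coarsened ones). Shortest-path distance $d_G(u,v)$: minimal total length of a path from $u$ to $v$ in $(V,E)$ ($0$ if $u=v$, $+\infty$ if none). Triangle-aware filtration $\widetilde{\mathcal C}(G)$: simplex $\sigma\subseteq V$ enters at scale $t(\sigma)$, with $t(\{u\})=0$, $t(\{u,v\})=d_G(u,v)$, $t(\{u,v,w\})=\min\{d_G(u,v)+d_G(v,w),d_G(u,w)+d_G(v,w),d_G(u,v)+d_G(u,w)\}$,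 and for dimension $\ge3$, $t(\sigma)$ is the max of $t$ over its codimension-one faces. $PD(G)$ is the persistence diagram (multiset of points $(r_b,r_d)$, over a fixed set of homological dimensions) of this filtration. Bottleneck distance: for diagrams $\mu,\nu$ and diagonal $\Delta=\{(a,a):a\in\mathbb{R}\}$, $d_B(\mu,\nu)=\inf_{\pi}\sup_{x}\|x-\pi(x)\|_\infty$, the infimum over bijections $\pi:\mu\cup\Delta\to\nu\cup\Delta$. Score: $S_\theta(G)=\frac{|f^E_\theta(G)|}{|E|}+\lambda(G)\,d_B(PD(G),PD(f_\theta(G)))$ with $\lambda(G)=\big[\max_{\theta\ge0}d_B(PD(G),PD(f_\theta(G)))\big]^{-1}$. The topological spatial graph coarsening is $F(G)=f_{\theta^*}(G)$ with $\theta^*\in\arg\min_{\theta\ge0}S_\theta(G)$. *)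

From HB Require Import structures.
From mathcomp Require Import all_boot all_order all_algebra.
From mathcomp Require Import all_classical all_reals.
From mathcomp Require Import ereal.

Set Implicit Arguments.
Unset Strict Implicit.
Unset Printing Implicit Defensive.

Import Order.TTheory GRing.Theory Num.Theory.
Local Open Scope ring_scope.

Section SpatialGraphs.
Variables (R : realType) (p : nat).

(* A spatial graph on a finite ambient type T: node set V, undirected edges
   represented as 2-element subsets of V, and positions x_u in R^p
   (column vectors).  Positions outside V are irrelevant. *)
Record sgraph (T : finType) := SGraph {
  sV : {set T};
  sE : {set {set T}};
  sX : T -> 'cV[R]_p
}.

Definition wf_sgraph (T : finType) (G : sgraph T) : Prop :=
  forall e, e \in sE G -> e \subset sV G /\ #|e| = 2%N.

Definition enorm (x : 'cV[R]_p) : R := Num.sqrt (\sum_i (x i 0) ^+ 2).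

Definition elen (T : finType) (G : sgraph T) (u v : T) : R :=
  enorm (sX G u - sX G v).

Definition adj (T : finType) (G : sgraph T) : rel T :=
  fun u v => [set u; v] \in sE G.

Definition deg (T : finType) (G : sgraph T) (u : T) : nat :=
  #|[set e in sE G | u \in e]|.

Definition subadj (T : finType) (G : sgraph T) (theta : R) : rel T :=
  fun u v => adj G u v && (elen G u v <= theta).

Definition hnode (T : finType) (G : sgraph T) (theta : R) (u : T) : {set T} :=
  [set v | connect (subadj G theta) u v].

Definition coarseV (T : finType) (G : sgraph T) (theta : R) : {set {set T}} :=
  [set hnode G theta u | u in sV G].

Definition coarseE (T : finType) (G : sgraph T) (theta : R)
  : {set {set {set T}}} :=
  [set [set Vi; Vj] | Vi in coarseV G theta, Vj in coarseV G theta &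
     (Vi != Vj) && [exists u in Vi, exists v in Vj, adj G u v]].

Inductive posmode := AveragePos | DegreePos.

Definition coarseX (T : finType) (G : sgraph T) (m : posmode) (S : {set T})
  : 'cV[R]_p :=
  match m with
  | AveragePos => (#|S|%:R)^-1 *: \sum_(u in S) sX G u
  | DegreePos =>
      match [pick u in S] with
      | Some u0 => sX G [arg max_(u > u0 in S) deg G u]
      | None => 0
      end
  end.

Definition coarsen (T : finType) (m : posmode) (theta : R) (G : sgraph T)
  : sgraph {set T} :=
  SGraph (coarseV G theta) (coarseE G theta) (coarseX G m).

Definition psi (T : finType) (Rm : 'M[R]_p) (A : 'cV[R]_p) (k : R)
  (G : sgraph T) : sgraph T :=
  SGraph (sV G) (sE G) (fun u => k *: (Rm *m sX G u) + A).

Definition sg_eq (T : finType) (G1 G2 : sgraph T) : Prop :=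
  [/\ sV G1 = sV G2, sE G1 = sE G2 & {in sV G1, sX G1 =1 sX G2}].

Local Open Scope ereal_scope.

Fixpoint walklen (T : finType) (G : sgraph T) (u : T) (s : seq T) : R :=
  match s with
  | [::] => 0%R
  | v :: s' => (elen G u v + walklen G v s')%R
  end.

Definition spdist (T : finType) (G : sgraph T) (u v : T) : \bar R :=
  ereal_inf [set (walklen G u s)%:E | s in
               [set s | path (adj G) u s && (last u s == v)]].

Definition tbase (T : finType) (G : sgraph T) (sigma : {set T}) : \bar R :=
  match enum sigma with
  | [:: u; v] => spdist G u v
  | [:: u; v; w] =>
      mine (spdist G u v + spdist G v w)
        (mine (spdist G u w + spdist G v w) (spdist G u v + spdist G u w))
  | _ => 0
  end.

Fixpoint tfilt_rec (T : finType) (G : sgraph T) (n : nat) (sigma : {set T})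
  : \bar R :=
  match n with
  | 0%N => 0
  | n'.+1 => if (#|sigma| <= 3)%N then tbase G sigma
             else \big[maxe/-oo]_(x in sigma) tfilt_rec G n' (sigma :\ x)
  end.

Definition tfilt (T : finType) (G : sgraph T) (sigma : {set T}) : \bar R :=
  tfilt_rec G #|sigma| sigma.

(* Sublevel complex: simplices sigma (nonempty subsets of V) with
   t(sigma) <= r, or t(sigma) < r when [strict] (left limit r^-). *)
Definition inK (T : finType) (G : sgraph T) (r : \bar R) (strict : bool)
  (sigma : {set T}) : bool :=
  [&& sigma \subset sV G, sigma != finset.set0 &
      if strict then tfilt G sigma < r else tfilt G sigma <= r].

Local Close Scope ereal_scope.

(* Simplicial homology with coefficients in a field F, via matrices indexed
   by all subsets of T. *)
Section Homology.
Variable (F : fieldType).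

Definition nS (T : finType) := #|{: {set T}}|.

Definition sidx (T : finType) (i : 'I_(nS T)) : {set T} := enum_val i.

Definition vpos (T : finType) (x : T) (sigma : {set T}) : nat :=
  #|[set y in sigma | (enum_rank y < enum_rank x)%N]|.

(* boundary: row vector convention, c *m bdry = boundary of c *)
Definition bdry (T : finType) : 'M[F]_(nS T) :=
  \matrix_(i, j)
    (if (1 < #|sidx i|)%N then
       \sum_(x in sidx i)
          (sidx j == sidx i :\ x)%:R * (-1) ^+ vpos x (sidx i)
     else 0).

Definition chains (T : finType) (G : sgraph T) (q : nat) (r : \bar R)
  (strict : bool) : 'M[F]_(nS T) :=
  diag_mx (\row_i ((inK G r strict (sidx i) && (#|sidx i| == q.+1))%:R)).

Definition cycles (T : finType) (G : sgraph T) q r strict : 'M[F]_(nS T) :=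
  (chains G q r strict :&: kermx (bdry T))%MS.

Definition bounds (T : finType) (G : sgraph T) q r strict : 'M[F]_(nS T) :=
  (chains G q.+1 r strict *m bdry T)%MS.

(* rank of H_q(K_r) -> H_q(K_s) *)
Definition prank (T : finType) (G : sgraph T) (q : nat)
  (r : \bar R) (sr : bool) (s : \bar R) (ss : bool) : int :=
  (\rank (cycles G q r sr))%:Z
  - (\rank (cycles G q r sr :&: bounds G q s ss)%MS)%:Z.

(* multiplicity of the point (b,d), b < d, in the q-th diagram *)
Definition pmult (T : finType) (G : sgraph T) (q : nat) (b : R) (d : \bar R)
  : int :=
  if d is +oo%E then
    prank G q b%:E false +oo%E true - prank G q b%:E true +oo%E true
  else
    prank G q b%:E false d true - prank G q b%:E true d true
    - prank G q b%:E false d false + prank G q b%:E true d false.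

Definition is_diagram (T : finType) (G : sgraph T) (q : nat)
  (s : seq (R * \bar R)) : Prop :=
  forall b d, (count_mem (b, d) s)%:Z =
              (if (b%:E < d)%E then pmult G q b d else 0).

Definition PDq (T : finType) (G : sgraph T) (q : nat) : seq (R * \bar R) :=
  xget [::] [set s | is_diagram G q s].

End Homology.

Local Open Scope ereal_scope.

(* Bottleneck distance: bijections between (points of s1) + diagonal and
   (points of s2) + diagonal; the diagonal point (a,a) is indexed by a. *)
Definition linf (x y : R * \bar R) : \bar R :=
  maxe (`|x.1 - y.1|%R)%:E (if x.2 == y.2 then 0 else `|x.2 - y.2|).

Definition dpt (s : seq (R * \bar R)) (x : 'I_(size s) + R) : R * \bar R :=
  match x with
  | inl i => nth (0%R, 0) s i
  | inr a => (a, a%:E)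
  end.

Definition bottleneck (s1 s2 : seq (R * \bar R)) : \bar R :=
  ereal_inf [set ereal_sup [set linf (dpt x) (dpt (pi x)) | x in [set: _]]
            | pi in [set pi : 'I_(size s1) + R -> 'I_(size s2) + R
                     | bijective pi]].

Definition dB (F : fieldType) (dims : seq nat) (T1 T2 : finType)
  (G1 : sgraph T1) (G2 : sgraph T2) : \bar R :=
  \big[maxe/0]_(q <- dims) bottleneck (PDq F G1 q) (PDq F G2 q).

Definition dBsup (F : fieldType) (dims : seq nat) (m : posmode)
  (T : finType) (G : sgraph T) : \bar R :=
  ereal_sup [set dB F dims G (coarsen m theta G) | theta in [set theta | (0 <= theta)%R]].

Definition score (F : fieldType) (dims : seq nat) (m : posmode)
  (T : finType) (G : sgraph T) (theta : R) : \bar R :=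
  (#|coarseE G theta|%:R / #|sE G|%:R)%:E
  + ((fine (dBsup F dims m G))^-1)%:E * dB F dims G (coarsen m theta G).

Definition argmin_score (F : fieldType) (dims : seq nat) (m : posmode)
  (T : finType) (G : sgraph T) : set R :=
  [set theta | (0 <= theta)%R /\
     forall theta', (0 <= theta')%R -> score F dims m G theta <= score F dims m G theta'].

End SpatialGraphs.

From HB Require Import structures.
From mathcomp Require Import all_boot all_order all_algebra.
From mathcomp Require Import all_classical all_reals.
From mathcomp Require Import ereal.
Import Order.TTheory GRing.Theory Num.Theory.
Local Open Scope ring_scope.
Local Open Scope classical_set_scope.

(* A similarity x |-> k R x + A multiplies every edge length by k.  Shortest-path
   distances, hence all filtration values, scale by k, so every persistence
   diagram is the image of the old one under (b, d) |-> (k b, k d), and bottleneck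
   distances scale by k.  The sub-threshold graph of G' at k theta is that of G
   at theta, so the coarsenings have the same hypernodes and hyperedges, and in
   S_{k theta}(G') the factor k of the bottleneck term cancels against the
   factor k of its normalising supremum. *)

Set Implicit Arguments.
Unset Strict Implicit.
Unset Printing Implicit Defensive.

Section EuclideanNorm.
Variables (R : realType) (p : nat).

Lemma enormZ (k : R) (x : 'cV[R]_p) : 0 <= k -> enorm (k *: x) = k * enorm x.
Proof.
move=> k_ge0; rewrite /enorm.
under eq_bigr do rewrite mxE exprMn.
by rewrite -mulr_sumr sqrtrM ?sqr_ge0 // sqrtr_sqr ger0_norm.
Qed.

Lemma enorm_orthogonal (Rm : 'M[R]_p) (x : 'cV[R]_p) :
  Rm^T *m Rm = 1%:M -> enorm (Rm *m x) = enorm x.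
Proof.
have enormE y : enorm y = Num.sqrt ((y^T *m y) 0 0).
  by rewrite /enorm mxE; congr Num.sqrt; apply: eq_bigr => i _; rewrite mxE expr2.
by move=> RmO; rewrite !enormE trmx_mul -mulmxA (mulmxA Rm^T) RmO mul1mx.
Qed.

Lemma enorm_similarityB (Rm : 'M[R]_p) (A : 'cV[R]_p) (k : R) (x y : 'cV[R]_p) :
  Rm^T *m Rm = 1%:M -> 0 <= k ->
  enorm ((k *: (Rm *m x) + A) - (k *: (Rm *m y) + A)) = k * enorm (x - y).
Proof.
move=> RmO k_ge0.
by rewrite opprD addrACA subrr addr0 -scalerBr -mulmxBr enormZ // enorm_orthogonal.
Qed.

End EuclideanNorm.

Section PositiveScaling.
Variables (R : realType) (k : R).
Hypothesis k_gt0 : 0 < k.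
Local Open Scope ereal_scope.

Lemma pmuleDr (x y : \bar R) : k%:E * (x + y) = k%:E * x + k%:E * y.
Proof.
case: x => [x| |]; case: y => [y| |] //=;
  rewrite ?gt0_muley ?gt0_muleNy ?lte_fin //=.
by rewrite -EFinD -EFinM mulrDr.
Qed.

Lemma pmule_abseB (x y : \bar R) : `|k%:E * x - k%:E * y| = k%:E * `|x - y|.
Proof.
case: x => [x| |]; case: y => [y| |] //=;
  rewrite ?gt0_muley ?gt0_muleNy ?lte_fin //=.
by rewrite -mulrBr normrM gtr0_norm.
Qed.

Lemma pmuleVK (x : \bar R) : k%:E * (k^-1%:E * x) = x.
Proof. by rewrite muleA -EFinM mulfV ?gt_eqF // mul1e. Qed.

Lemma pmuleI : injective (fun x : \bar R => k%:E * x).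
Proof.
move=> x y /= /(congr1 (fun z => k^-1%:E * z)).
by rewrite !muleA -!EFinM mulVf ?gt_eqF // !mul1e.
Qed.

Lemma fine_pmule (x : \bar R) : fine (k%:E * x) = (k * fine x)%R.
Proof.
by case: x => [x| |] //=; rewrite ?gt0_muley ?gt0_muleNy ?lte_fin //= mulr0.
Qed.

Definition scale_pt (x : R * \bar R) : R * \bar R := ((k * x.1)%R, k%:E * x.2).
Definition unscale_pt (x : R * \bar R) : R * \bar R := ((k^-1 * x.1)%R, k^-1%:E * x.2).

Lemma scale_pt_inj : injective scale_pt.
Proof.
move=> [a b] [c d] [/mulfI ac /pmuleI bd].
by rewrite ac ?gt_eqF // bd.
Qed.

Lemma unscale_ptK : cancel unscale_pt scale_pt.
Proof.
by case=> a b; rewrite /scale_pt /unscale_pt /= pmuleVK mulrA mulfV ?gt_eqF ?mul1r.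
Qed.

Lemma count_scale_pt (s : seq (R * \bar R)) x :
  count_mem (scale_pt x) (map scale_pt s) = count_mem x s.
Proof. by rewrite count_map; apply: eq_count => y /=; rewrite (inj_eq scale_pt_inj). Qed.

Lemma linf_scale_pt x y : linf (scale_pt x) (scale_pt y) = k%:E * linf x y.
Proof.
rewrite /linf /scale_pt /= maxe_pMr ?lee_fin ?ltW //.
rewrite -EFinM -mulrBr normrM gtr0_norm // (inj_eq pmuleI).
by case: eqP => _; rewrite ?mule0 ?pmule_abseB.
Qed.

End PositiveScaling.

Section ScaledGraph.
Variables (R : realType) (p : nat) (U : finType) (k : R).
Hypothesis k_gt0 : 0 < k.
Variables (H H' : sgraph R p U).
Hypothesis sV_scaled : sV H' = sV H.
Hypothesis sE_scaled : sE H' = sE H.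
Hypothesis elen_scaled : forall u v, adj H u v -> elen H' u v = k * elen H u v.

Lemma adj_scaled : adj H' = adj H.
Proof. by rewrite /adj sE_scaled. Qed.

Lemma walklen_scaled u s : path (adj H) u s -> walklen H' u s = k * walklen H u s.
Proof.
elim: s u => [|v s IH] u /=; first by rewrite mulr0.
by move=> /andP[huv hs]; rewrite elen_scaled // IH // mulrDr.
Qed.

Local Open Scope ereal_scope.

Lemma spdist_scaled u v : spdist H' u v = k%:E * spdist H u v.
Proof.
rewrite /spdist -ereal_inf_pZl //; congr ereal_inf; rewrite adj_scaled.
apply/seteqP; split => x /=.
  move=> [s hs <-]; exists (walklen H u s)%:E; first by exists s.
  by rewrite walklen_scaled // (andP hs).1.
by move=> [y [s hs <-] <-]; exists s; rewrite // walklen_scaled // (andP hs).1.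
Qed.

Lemma tfilt_rec_scaled n sigma : tfilt_rec H' n sigma = k%:E * tfilt_rec H n sigma.
Proof.
elim: n sigma => [|n IH] sigma /=; first by rewrite mule0.
case: ifP => _.
  rewrite /tbase; case: (enum sigma) => [|u [|v [|w [|? ?]]]]; rewrite ?mule0 //.
    exact: spdist_scaled.
  by rewrite !spdist_scaled !mine_pMr ?lee_fin ?ltW // !pmuleDr.
rewrite (big_morph (fun x => k%:E * x) (id1 := -oo) (op1 := maxe)).
- by apply: eq_bigr => x _; rewrite IH.
- by move=> x y; rewrite maxe_pMr // lee_fin ltW.
- by rewrite gt0_muleNy // lte_fin.
Qed.

Lemma inK_scaled r strict sigma : inK H' (k%:E * r) strict sigma = inK H r strict sigma.
Proof.
rewrite /inK /tfilt sV_scaled tfilt_rec_scaled.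
by case: strict; rewrite ?lte_pmul2l ?lee_pmul2l ?lte_fin.
Qed.

Variable F : fieldType.

Lemma prank_scaled q r sr s ss :
  prank F H' q (k%:E * r) sr (k%:E * s) ss = prank F H q r sr s ss.
Proof.
have chains_scaled i t st : chains F H' i (k%:E * t) st = chains F H i t st.
  by congr diag_mx; apply/rowP => j; rewrite !mxE inK_scaled.
by rewrite /prank /cycles /bounds !chains_scaled.
Qed.

Lemma pmult_scaled q b d : pmult F H' q (k * b) (k%:E * d) = pmult F H q b d.
Proof.
have fixed_death r sr s ss : k%:E * s = s ->
    prank F H' q (k%:E * r) sr s ss = prank F H q r sr s ss.
  by move=> {1}<-; apply: prank_scaled.
case: d => [d| |]; rewrite /pmult ?EFinM ?prank_scaled //;
  rewrite ?gt0_muley ?gt0_muleNy ?lte_fin // !fixed_death //;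
  by rewrite ?gt0_muley ?gt0_muleNy ?lte_fin.
Qed.

Lemma is_diagram_scaled q s :
  is_diagram F H' q (map (scale_pt k) s) <-> is_diagram F H q s.
Proof.
have pt_scaled b d : (if (k * b)%:E < k%:E * d then pmult F H' q (k * b) (k%:E * d) else 0%R)
    = (if b%:E < d then pmult F H q b d else 0%R).
  by rewrite pmult_scaled EFinM lte_pmul2l ?lte_fin.
split => D b d.
  have := D (scale_pt k (b, d)).1 (scale_pt k (b, d)).2.
  by rewrite -surjective_pairing count_scale_pt // => ->; apply: pt_scaled.
move: (unscale_ptK k_gt0 (b, d)); case: (unscale_pt k _) => b0 d0 [<- <-].
rewrite -[LHS]/(Posz (count_mem (scale_pt k (b0, d0)) _)) count_scale_pt // D.
exact/esym/pt_scaled.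
Qed.

Lemma is_diagram_perm_eq (V : finType) (G : sgraph R p V) q s1 s2 :
  is_diagram F G q s1 -> is_diagram F G q s2 -> perm_eq s1 s2.
Proof.
move=> D1 D2; apply/allP => -[b d] _; apply/eqP.
by have := D1 b d; rewrite -D2 => -[].
Qed.

Lemma PDq_scaled q : perm_eq (PDq F H' q) (map (scale_pt k) (PDq F H q)).
Proof.
rewrite /PDq; case: (xgetP [::] [set s | is_diagram F H q s]) => [s _ Ds | noD].
  apply: (@is_diagram_perm_eq _ H' q); last exact/is_diagram_scaled.
  apply: (@xgetPex _ [::] [set s | is_diagram F H' q s]).
  by exists (map (scale_pt k) s); apply/is_diagram_scaled.
rewrite xgetPN //= => t Dt; apply: (noD (map (unscale_pt k) t)) => /=.
by apply/is_diagram_scaled; rewrite -map_comp (eq_map (unscale_ptK k_gt0)) map_id.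
Qed.

End ScaledGraph.

Section BottleneckScaling.
Variables (R : realType) (k : R).
Hypothesis k_gt0 : 0 < k.
Local Open Scope ereal_scope.

Lemma bottleneck_transport (s1 s2 t1 t2 : seq (R * \bar R))
  (g1 : 'I_(size s1) + R -> 'I_(size t1) + R)
  (g2 : 'I_(size s2) + R -> 'I_(size t2) + R) :
  bijective g1 -> bijective g2 ->
  (forall x, dpt (g1 x) = scale_pt k (dpt x)) ->
  (forall x, dpt (g2 x) = scale_pt k (dpt x)) ->
  bottleneck t1 t2 = k%:E * bottleneck s1 s2.
Proof.
move=> [h1 g1K h1K] [h2 g2K h2K] dpt_g1 dpt_g2.
have sup_conj pi pi' : (forall y, pi' (g1 y) = g2 (pi y)) ->
    ereal_sup [set linf (dpt x) (dpt (pi' x)) | x in [set: _]] =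
    k%:E * ereal_sup [set linf (dpt y) (dpt (pi y)) | y in [set: _]].
  move=> pi'E; rewrite -ereal_sup_pZl //; congr ereal_sup.
  apply/seteqP; split => z /=.
    move=> [x _ <-]; exists (linf (dpt (h1 x)) (dpt (pi (h1 x)))); first by exists (h1 x).
    by rewrite -linf_scale_pt // -dpt_g1 -dpt_g2 -pi'E h1K.
  by move=> [w [y _ <-] <-]; exists (g1 y) => //; rewrite pi'E dpt_g1 dpt_g2 linf_scale_pt.
rewrite /bottleneck -ereal_inf_pZl //; congr ereal_inf.
apply/seteqP; split => z /=.
  move=> [pi' bij_pi' <-].
  exists (ereal_sup [set linf (dpt y) (dpt ((h2 \o pi' \o g1) y)) | y in [set: _]]).
    exists (h2 \o pi' \o g1) => //.
    by apply: bij_comp; [apply: bij_comp => //; exists g2 | exists h1].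
  by rewrite (sup_conj (h2 \o pi' \o g1)) // => y /=; rewrite h2K.
move=> [w [pi bij_pi <-] <-]; exists (g2 \o pi \o h1).
  by apply: bij_comp; [apply: bij_comp => //; exists h2 | exists g1].
by rewrite (sup_conj pi) // => y /=; rewrite g1K.
Qed.

Lemma perm_scale_pt_bij (s t : seq (R * \bar R)) :
  perm_eq t (map (scale_pt k) s) ->
  exists2 g : 'I_(size s) + R -> 'I_(size t) + R,
    bijective g & forall x, dpt (g x) = scale_pt k (dpt x).
Proof.
rewrite perm_sym => /(perm_iotaP (0%R, 0)) [I permI tE].
have size_t : size s = size t.
  by rewrite -(size_map (scale_pt k)) tE size_map (perm_size permI) size_iota.
have size_I : size I = size s by rewrite -(size_map (nth (0%R, 0) t)) -tE size_map.
have I_lt (i : 'I_(size s)) : (nth 0%N I i < size t)%N.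
  have : nth 0%N I i \in I by rewrite mem_nth // size_I.
  by rewrite (perm_mem permI) mem_iota.
pose sg (i : 'I_(size s)) : 'I_(size t) := Ordinal (I_lt i).
have sg_inj : injective sg.
  move=> i j /(congr1 val) /= /eqP.
  by rewrite nth_uniq ?size_I ?(perm_uniq permI) ?iota_uniq // => /eqP /val_inj.
have [sgi sgK sgiK] : bijective sg by apply: inj_card_bij => //; rewrite !card_ord size_t.
have nth_sg (i : 'I_(size s)) : nth (0%R, 0) t (sg i) = scale_pt k (nth (0%R, 0) s i).
  have := congr1 (fun l => nth (0%R, 0) l i) tE.
  by rewrite (nth_map (0%R, 0)) // (nth_map 0%N) ?size_I // => <-.
exists (fun x => match x with inl i => inl (sg i) | inr a => inr (k * a)%R end).
  exists (fun x => match x with inl i => inl (sgi i) | inr a => inr (k^-1 * a)%R end).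
    by case=> [i|a]; rewrite ?sgK // mulrA mulVf ?gt_eqF ?mul1r.
  by case=> [i|a]; rewrite ?sgiK // mulrA mulfV ?gt_eqF ?mul1r.
by case=> [i|a] //=; rewrite nth_sg.
Qed.

Lemma bottleneck_scale_pt (s1 s2 t1 t2 : seq (R * \bar R)) :
  perm_eq t1 (map (scale_pt k) s1) -> perm_eq t2 (map (scale_pt k) s2) ->
  bottleneck t1 t2 = k%:E * bottleneck s1 s2.
Proof.
move=> /perm_scale_pt_bij [g1 bij_g1 dpt_g1] /perm_scale_pt_bij [g2 bij_g2 dpt_g2].
exact: bottleneck_transport bij_g1 bij_g2 dpt_g1 dpt_g2.
Qed.

End BottleneckScaling.

Section Similarity.
Variables (R : realType) (p : nat) (T : finType) (F : fieldType)
  (dims : seq nat) (m : posmode) (G : sgraph R p T)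
  (Rm : 'M[R]_p) (A : 'cV[R]_p) (k : R).
Hypothesis Rm_orthogonal : Rm^T *m Rm = 1%:M.
Hypothesis k_gt0 : 0 < k.

Let G' := psi Rm A k G.

Lemma elen_psi u v : elen G' u v = k * elen G u v.
Proof. exact/enorm_similarityB/ltW. Qed.

Lemma coarseV_psi theta : coarseV G' (k * theta) = coarseV G theta.
Proof.
have subadj_psi : subadj G' (k * theta) =2 subadj G theta.
  by move=> u v; rewrite /subadj elen_psi ler_pM2l.
rewrite /coarseV; apply: eq_imset => u; apply/setP => v.
by rewrite !inE (eq_connect subadj_psi).
Qed.

Lemma coarseE_psi theta : coarseE G' (k * theta) = coarseE G theta.
Proof. by rewrite /coarseE coarseV_psi. Qed.

Lemma coarseX_psi theta S : S \in coarseV G theta ->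
  coarseX G' m S = k *: (Rm *m coarseX G m S) + A.
Proof.
case/imsetP => u _ ->.
have u_mem : u \in hnode G theta u by rewrite inE connect0.
case: m => /=.
  rewrite big_split /= sumr_const -scaler_sumr -mulmx_sumr scalerDr -scaler_nat.
  rewrite (scalerA _ _ A) mulVf ?pnatr_eq0 -?lt0n; last by apply/card_gt0P; exists u.
  by rewrite scale1r -scalemxAr !scalerA mulrC.
by case: pickP => [//|/(_ u)]; rewrite u_mem.
Qed.

Lemma adj_coarsen_mem theta Vi Vj : adj (coarsen m theta G) Vi Vj ->
  Vi \in coarseV G theta /\ Vj \in coarseV G theta.
Proof.
rewrite /adj /= => /imset2P [X Y hX]; rewrite inE => /andP [hY _] XY.
have : Vi \in [set X; Y]%SET by rewrite -XY set21.
have : Vj \in [set X; Y]%SET by rewrite -XY set22.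
by rewrite !inE => /orP [] /eqP -> /orP [] /eqP ->.
Qed.

Local Open Scope ereal_scope.

Lemma dB_psi theta :
  dB F dims G' (coarsen m (k * theta) G') = k%:E * dB F dims G (coarsen m theta G).
Proof.
rewrite /dB (big_morph (fun x => k%:E * x) (id1 := 0) (op1 := maxe)); last first.
- by rewrite mule0.
- by move=> x y; rewrite maxe_pMr // lee_fin ltW.
apply: eq_bigr => q _; apply: (bottleneck_scale_pt k_gt0).
  by apply: PDq_scaled => // u v _; apply: elen_psi.
apply: PDq_scaled => //=; rewrite ?coarseV_psi ?coarseE_psi //.
move=> Vi Vj /adj_coarsen_mem [Vi_mem Vj_mem].
by rewrite /elen /= !(coarseX_psi Vi_mem, coarseX_psi Vj_mem) enorm_similarityB // ltW.
Qed.

Lemma dBsup_psi : dBsup F dims m G' = k%:E * dBsup F dims m G.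
Proof.
rewrite /dBsup -ereal_sup_pZl //; congr ereal_sup.
apply/seteqP; split => z /=.
  move=> [t t_ge0 <-]; exists (dB F dims G (coarsen m (t / k)%R G)).
    by exists (t / k)%R; rewrite //= divr_ge0 // ltW.
  by rewrite -dB_psi mulrC divfK ?gt_eqF.
move=> [w [t t_ge0 <-] <-]; exists (k * t)%R; last by rewrite dB_psi.
by rewrite /= mulr_ge0 // ltW.
Qed.

Lemma score_psi theta : score F dims m G' (k * theta) = score F dims m G theta.
Proof.
rewrite /score coarseE_psi dBsup_psi dB_psi fine_pmule //; congr (_ + _).
by rewrite muleA -EFinM invfM mulrAC mulVf ?gt_eqF // mul1r.
Qed.

Lemma argmin_score_psi :
  argmin_score F dims m G' = (fun theta => k * theta)%R @` argmin_score F dims m G.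
Proof.
have kK b : (k * (b / k))%R = b by rewrite mulrC divfK ?gt_eqF.
apply/seteqP; split => b /=.
  move=> [b_ge0 b_min]; exists (b / k)%R; last exact: kK.
  split=> [|t t_ge0]; first by rewrite divr_ge0 // ltW.
  by rewrite -!score_psi kK b_min // mulr_ge0 // ltW.
move=> [t [t_ge0 t_min] <-]; split=> [|b' b'_ge0]; first by rewrite mulr_ge0 // ltW.
by rewrite -(kK b') !score_psi t_min // divr_ge0 // ltW.
Qed.

Lemma coarsen_psi theta :
  sg_eq (coarsen m (k * theta) G') (psi Rm A k (coarsen m theta G)).
Proof.
split; [exact: coarseV_psi | exact: coarseE_psi | move=> S].
by rewrite [sV _]/= coarseV_psi => /coarseX_psi.
Qed.

End Similarity.

Unset Implicit Arguments.
Set Strict Implicit.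
Set Printing Implicit Defensive.

(* The positivity, finiteness and attainment of sup_theta dB only make the
   paper's normalisation lambda(G) meaningful; [score] reads lambda through
   [fine] and [^-1], and the scaling identity holds without them. *)
Theorem proposition3 (R : realType) (p : nat) (T : finType) (F : fieldType)
  (dims : seq nat) (m : posmode) (G : sgraph R p T)
  (Rm : 'M[R]_p) (A : 'cV[R]_p) (k : R) :
  wf_sgraph G -> sE G != finset.set0 ->
  Rm^T *m Rm = 1%:M -> 0 < k ->
  (0 < dBsup F dims m G)%E -> (dBsup F dims m G < +oo)%E ->
  (exists2 theta0 : R, 0 <= theta0 &
     dB F dims G (coarsen m theta0 G) = dBsup F dims m G) ->
  let G' := psi Rm A k G in
  [/\ (forall theta : R, 0 <= theta ->
         score F dims m G' (k * theta) = score F dims m G theta),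
      argmin_score F dims m G' = (fun theta => k * theta) @` argmin_score F dims m G
    & forall thetas : R, argmin_score F dims m G thetas ->
        argmin_score F dims m G' (k * thetas) /\
        sg_eq (coarsen m (k * thetas) G') (psi Rm A k (coarsen m thetas G))].
Proof.
move=> _ _ Rm_orthogonal k_gt0 _ _ _ G'.
split=> [theta _ | | thetas thetas_min]; first exact: score_psi.
  exact: argmin_score_psi.
split; last exact: coarsen_psi.
by rewrite argmin_score_psi //; exists thetas.
Qed.
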